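(* Assume $\hat\omega\in\mathbb{P}_\Omega$ and that $\hat\omega$ and $\mathbf K$ are such that, for every $\omega^{(n)}\in\mathbb{P}_\Omega$ (with $\Delta_n\ne0$), the step $\hat\alpha_n$ defined in the context satisfies $\hat\alpha_n\le\omega^{(n)}_{i_n^-}$. Then the vertex-exchange iteration $\omega^{(n+1)}=\omega^{(n)}+\hat\alpha_n\Delta_n$, initialized at any $\omega^{(1)}\in\mathbb{P}_\Omega$, satisfies $$\|\omega^{(n)}-\hat\omega\|_{\mathbf K}^2\le\frac{8\lambda_{\max}(\mathbf K)}{n+3},\qquad n\ge1.$$
   Context: $\mathbf K$ is a real symmetric positive definite $\Omega\times\Omega$ matrix with largest eigenvalue $\lambda_{\max}(\mathbf K)$; $\|u\|_{\mathbf K}^2=u^T\mathbf K u$. $e_i$ is the $i$-th canonical basis vector of $\mathbb{R}^\Omega$ and $\mathbb{P}_\Omega=\{\omega\in\mathbb{R}^\Omega:\omega_i\ge0,\sum_i\omega_i=1\}$. Vertex-exchange step: $i_n^+\in\arg\min_{i=1,\dots,\Omega}e_i^T\mathbf K(\omega^{(n)}-\hat\omega)$, $i_n^-\in\arg\max_{i:\,\omega^{(n)}_i>0}e_i^T\mathbf K(\omega^{(n)}-\hat\omega)$, $\Delta_n=e_{i_n^+}-e_{i_n^-}$, and $\hat\alpha_n=\Delta_n^T\mathbf K(\hat\omega-\omega^{(n)})/\|\Delta_n\|_{\mathbf K}^2$ (if $\Delta_n=0$ the iterate is left unchanged). *)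

From HB Require Import structures.
From mathcomp Require Import all_boot all_order all_algebra.
Set Implicit Arguments. Unset Strict Implicit. Unset Printing Implicit Defensive.
Import Order.TTheory GRing.Theory Num.Theory.
Local Open Scope ring_scope.

Section Defs.
Variables (R : rcfType) (Om : nat).

Definition Knorm2 (K : 'M[R]_Om) (u : 'cV[R]_Om) : R := (u^T *m K *m u) 0 0.

Definition spd (K : 'M[R]_Om) : Prop :=
  K^T = K /\ forall u : 'cV[R]_Om, u != 0 -> 0 < Knorm2 K u.

Definition is_lambda_max (K : 'M[R]_Om) (lam : R) : Prop :=
  eigenvalue K lam /\ forall a, eigenvalue K a -> a <= lam.

Definition e_ (i : 'I_Om) : 'cV[R]_Om := delta_mx i 0.

Definition in_simplex (w : 'cV[R]_Om) : Prop :=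
  (forall i, 0 <= w i 0) /\ \sum_i w i 0 = 1.

Definition gradc (K : 'M[R]_Om) (what w : 'cV[R]_Om) (i : 'I_Om) : R :=
  ((e_ i)^T *m K *m (w - what)) 0 0.

Definition is_iplus (K : 'M[R]_Om) (what w : 'cV[R]_Om) (ip : 'I_Om) : Prop :=
  forall j, gradc K what w ip <= gradc K what w j.

Definition is_iminus (K : 'M[R]_Om) (what w : 'cV[R]_Om) (im : 'I_Om) : Prop :=
  0 < w im 0 /\ forall j, 0 < w j 0 -> gradc K what w j <= gradc K what w im.

Definition Delta (ip im : 'I_Om) : 'cV[R]_Om := e_ ip - e_ im.

Definition alpha_hat (K : 'M[R]_Om) (what w : 'cV[R]_Om) (ip im : 'I_Om) : R :=
  ((Delta ip im)^T *m K *m (what - w)) 0 0 / Knorm2 K (Delta ip im).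

(* w' is obtained from w by one vertex-exchange step (for some admissible
   choice of the arg min / arg max indices) *)
Definition VE_step (K : 'M[R]_Om) (what : 'cV[R]_Om) (w w' : 'cV[R]_Om) : Prop :=
  exists ip im, [/\ is_iplus K what w ip, is_iminus K what w im &
    w' = if Delta ip im == 0 then w
         else w + alpha_hat K what w ip im *: Delta ip im].

End Defs.

From HB Require Import structures.
From mathcomp Require Import all_boot all_order all_algebra.
From mathcomp Require Import spectral complex.
From mathcomp Require Import ring lra.
Import Order.TTheory GRing.Theory Num.Theory.
Local Open Scope ring_scope.
Set Implicit Arguments. Unset Strict Implicit.

(* Let f = ||w - what||_K^2 and g = K (w - what).  Since f = w^T g - what^T g,
   and w charges only coordinates where g <= g_im while what is a probability
   vector with g >= g_ip, f is at most the gap G = g_im - g_ip.  The step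
   alpha_hat is the exact line search along Delta, so it lowers f to
   f - G^2 / ||Delta||_K^2, and ||Delta||_K^2 <= 2 lambda_max by the Rayleigh
   bound; the hypothesis alpha_hat <= w_im keeps the iterate in the simplex.
   Hence 2 lambda f_(n+1) <= 2 lambda f_n - f_n^2, and starting from
   f_1 <= 2 lambda this recursion gives n f_n <= 2 lambda, which is stronger
   than the claim because 2/n <= 8/(n+3) for n >= 1. *)

Lemma spectral_diag_eigenvalue (C : numClosedFieldType) n (A : 'M[C]_n) :
  A \is normalmx -> forall j, eigenvalue A (spectral_diag A 0 j).
Proof.
move=> /orthomx_spectralP; set P := spectralmx A; set d := spectral_diag A.
move=> AE j.
have Punit : P \in unitmx := spectral_unit A.
apply/eigenvalueP; exists (row j P).
  rewrite {1}AE !mulmxA -row_mul mulmxV // row1 -rowE row_diag_mx.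
  by rewrite -scalemxAl -rowE.
apply/eqP => Pj0.
have : row j (P *m invmx P) = delta_mx 0 j by rewrite mulmxV // row1.
rewrite row_mul Pj0 mul0mx => /matrixP/(_ 0 j)/eqP.
by rewrite !mxE !eqxx eq_sym oner_eq0.
Qed.

Section Rayleigh.
Variables (R : rcfType) (n : nat) (K : 'M[R]_n) (lam : R).
Hypotheses (Ksym : K^T = K) (Klam : forall a, eigenvalue K a -> a <= lam).
Local Notation toC := (real_complex R).
Local Notation KC := (map_mx toC K).

Lemma conj_real_complex (x : R) : (toC x)^* = toC x.
Proof. by apply: conj_Creal; apply/complex_realP; exists x. Qed.

Lemma map_complex_hermsym : KC \is hermsymmx.
Proof.
rewrite qualifE /= expr0 scale1r; apply/eqP/matrixP=> i j.
by rewrite !mxE conj_real_complex -{1}Ksym mxE.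
Qed.

Lemma spectral_diag_le_lambda (j : 'I_n) : spectral_diag KC 0 j <= toC lam.
Proof.
have /mxOverP/(_ 0 j)/complex_realP [r dr] :=
  hermitian_spectral_diag_real map_complex_hermsym.
rewrite dr lecR; apply: Klam; rewrite -(eigenvalue_map toC).
have := spectral_diag_eigenvalue (hermitian_normalmx map_complex_hermsym) j.
by rewrite dr.
Qed.

(* Through the complexification K = P^-1 diag(d) P with P unitary: for
   v := P u the form is sum_j d_j |v_j|^2 and u^T u is sum_j |v_j|^2. *)
Lemma Knorm2_le_lambda_max (u : 'cV[R]_n) : Knorm2 K u <= lam * (u^T *m u) 0 0.
Proof.
move: (hermitian_normalmx map_complex_hermsym) => /orthomx_spectralP.
set P := spectralmx KC; set d := spectral_diag KC => KCE.
have PU : P \in unitmx := spectral_unit KC.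
have iP := invmx_unitary (spectral_unitarymx KC).
pose v := P *m map_mx toC u.
pose v' := map_mx (fun x : R[i] => x^*) v^T.
have v'E : v' = (map_mx toC u)^T *m invmx P.
  rewrite iP /v' /v trmx_mul map_mxM; congr (_ *m _).
  by apply/matrixP=> a b; rewrite !mxE; apply: conj_real_complex.
have formE : toC (Knorm2 K u) = (v' *m diag_mx d *m v) 0 0.
  rewrite v'E /v !mulmxA -(mulmxA _ (invmx P)) -(mulmxA _ (invmx P *m _)) -KCE.
  by rewrite map_trmx -!map_mxM [RHS]mxE.
have normE : toC ((u^T *m u) 0 0) = (v' *m v) 0 0.
  by rewrite v'E /v mulmxA mulmxKV // map_trmx -!map_mxM [RHS]mxE.
rewrite -lecR rmorphM /= formE normE !mxE mulr_sumr; apply: ler_sum => j _.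
rewrite mul_mx_diag !mxE mulrAC [_ * (_ * _)]mulrC.
apply: ler_wpM2l; last exact: spectral_diag_le_lambda.
by rewrite mulrC mul_conjC_ge0.
Qed.

End Rayleigh.

Section QuadraticForm.
Variables (R : rcfType) (n : nat) (K : 'M[R]_n).

Lemma tr_e_mulmx (i : 'I_n) m (M : 'M[R]_(n, m)) j :
  ((e_ R i)^T *m M) 0 j = M i j.
Proof. by rewrite trmx_delta -rowE mxE. Qed.

Lemma tr_Delta_mulmx (ip im : 'I_n) (M : 'cV[R]_n) :
  ((Delta R ip im)^T *m M) 0 0 = M ip 0 - M im 0.
Proof.
by rewrite /Delta linearB /= mulmxBl -trace_mx11 raddfB /= !trace_mx11 !tr_e_mulmx.
Qed.

Lemma gradcE (what w : 'cV[R]_n) i : gradc K what w i = (K *m (w - what)) i 0.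
Proof. by rewrite /gradc -mulmxA tr_e_mulmx. Qed.

Lemma Delta_eq0 (ip im : 'I_n) : (Delta R ip im == 0) = (ip == im).
Proof.
apply/idP/idP => [|/eqP->]; last by rewrite /Delta subrr.
apply: contraLR => ne; apply/negP => /eqP/matrixP/(_ ip 0).
by rewrite /Delta !mxE eqxx (negbTE ne) subr0 => /eqP; rewrite oner_eq0.
Qed.

Lemma tr_Delta_mul_Delta (ip im : 'I_n) :
  ip != im -> ((Delta R ip im)^T *m Delta R ip im) 0 0 = 2.
Proof.
move=> ne; rewrite tr_Delta_mulmx /Delta !mxE !eqxx (negbTE ne) eq_sym (negbTE ne).
by rewrite /= subr0 sub0r opprK.
Qed.

Hypothesis Ksym : K^T = K.

Lemma Knorm2_addZ (d D : 'cV[R]_n) (a : R) :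
  Knorm2 K (d + a *: D) =
    Knorm2 K d + 2 * a * (D^T *m K *m d) 0 0 + a ^+ 2 * Knorm2 K D.
Proof.
have symE : (d^T *m K *m D) 0 0 = (D^T *m K *m d) 0 0.
  by rewrite -!trace_mx11 -mxtrace_tr !trmx_mul trmxK Ksym mulmxA.
rewrite /Knorm2 mulmxDr -scalemxAr [(d + _)^T]linearD /= linearZ /=.
rewrite !mulmxDl -!scalemxAl -[LHS]trace_mx11 !(mxtraceD, mxtraceZ) !trace_mx11.
rewrite symE; ring.
Qed.

End QuadraticForm.

Section Simplex.
Variables (R : rcfType) (n : nat).
Implicit Types u v : 'cV[R]_n.

Lemma simplex_le1 v j : in_simplex v -> v j 0 <= 1.
Proof. by case=> v0 <-; rewrite (bigD1 j) //= lerDl; apply: sumr_ge0. Qed.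

Lemma sum_Delta (ip im : 'I_n) : \sum_k Delta R ip im k 0 = 0.
Proof.
have sum_delta p : \sum_(k < n) (k == p)%:R = 1 :> R.
  rewrite (bigD1 p) //= eqxx big1 ?addr0 // => k /negbTE -> //.
under eq_bigr do rewrite /Delta !mxE !eqxx !andbT.
by rewrite sumrB !sum_delta subrr.
Qed.

Lemma in_simplex_exchange v (ip im : 'I_n) (a : R) :
  in_simplex v -> 0 <= a <= v im 0 -> in_simplex (v + a *: Delta R ip im).
Proof.
move=> [v0 v1] /andP[a0 a_le]; split=> [k|].
  rewrite !mxE !eqxx !andbT.
  have [->|kim] := eqVneq k im; first by case: (im == ip); rewrite /=; lra.
  have := v0 k; case: (k == ip); rewrite /=; lra.
rewrite (eq_bigr (fun k => v k 0 + a * Delta R ip im k 0)) => [|k _]; last first.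
  by rewrite !mxE.
by rewrite big_split /= -mulr_sumr sum_Delta v1 mulr0 addr0.
Qed.

Lemma simplex_sub_norm2_le2 u v :
  in_simplex u -> in_simplex v -> ((v - u)^T *m (v - u)) 0 0 <= 2.
Proof.
move=> hu hv; apply: (@le_trans _ _ (\sum_j (v j 0 + u j 0))).
  rewrite mxE; apply: ler_sum => j _; rewrite !mxE.
  have := hu.1 j; have := hv.1 j; have := simplex_le1 j hu; have := simplex_le1 j hv.
  nra.
by rewrite big_split /= hu.2 hv.2.
Qed.

(* Averaging the gradient g = K (v - what) against v sees only coordinates
   where v is positive, hence at most g_im; against what it is at least g_ip. *)
Lemma Knorm2_le_gradc_gap (K : 'M[R]_n) what v ip im :
  in_simplex what -> in_simplex v ->
  is_iplus K what v ip -> is_iminus K what v im ->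
  Knorm2 K (v - what) <= gradc K what v im - gradc K what v ip.
Proof.
move=> [h0 h1] [v0 v1] hp [_ hm].
rewrite !gradcE /Knorm2 -mulmxA mxE.
set g := K *m (v - what).
have -> : \sum_j (v - what)^T 0 j * g j 0 =
          \sum_j v j 0 * g j 0 - \sum_j what j 0 * g j 0.
  by rewrite -sumrB; apply: eq_bigr => j _; rewrite !mxE mulrBl.
apply: lerB.
  rewrite -[g im 0]mul1r -v1 mulr_suml; apply: ler_sum => j _.
  have := v0 j; rewrite le0r => /orP[/eqP->|vj]; first by rewrite !mul0r.
  by rewrite ler_pM2l // -!gradcE; apply: hm.
rewrite -[g ip 0]mul1r -h1 mulr_suml; apply: ler_sum => j _.
by apply: ler_wpM2l => //; rewrite -!gradcE; apply: hp.
Qed.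

End Simplex.

Lemma exact_line_search_decrease (R : realFieldType) (c f G q a : R) :
  0 <= f <= G -> 0 < q <= c -> a * q = G ->
  c * (f - 2 * a * G + a ^+ 2 * q) <= c * f - f ^+ 2.
Proof.
move=> /andP[f0 fG] /andP[q0 qc] aq.
have a0 : 0 <= a by rewrite -(pmulr_lge0 _ q0) aq; lra.
have -> : f - 2 * a * G + a ^+ 2 * q = f - a * G by rewrite -aq; ring.
have : G <= c * a by nra.
have : f ^+ 2 <= G * G by nra.
nra.
Qed.

Lemma harmonic_bound_succ (R : realFieldType) (n c f f' : R) :
  1 <= n -> 0 < c -> 0 <= f -> n * f <= c ->
  c * f' <= c * f - f ^+ 2 -> (n + 1) * f' <= c.
Proof.
move=> n1 c0 f0 nf h; rewrite -(ler_pM2l c0).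
have fc : f <= c by nra.
have : 0 <= (c - n * f) * (c - f) + f ^+ 2 by nra.
nra.
Qed.

Lemma harmonic_bound_le_rate (R : realFieldType) (n c f : R) :
  1 <= n -> 0 < c -> 0 <= f -> n * f <= 2 * c -> f <= 8 * c / (n + 3).
Proof. by move=> n1 c0 f0 nf; rewrite ler_pdivlMr; [nra | lra]. Qed.

Section VertexExchange.
Variables (R : rcfType) (n : nat) (K : 'M[R]_n) (lam : R) (what : 'cV[R]_n).
Hypotheses (Kspd : spd K) (Klam : is_lambda_max K lam).
Hypothesis what_simplex : in_simplex what.
Hypothesis alpha_hat_le : forall (v : 'cV[R]_n) (ip im : 'I_n),
  in_simplex v -> is_iplus K what v ip -> is_iminus K what v im ->
  Delta R ip im != 0 -> alpha_hat K what v ip im <= v im 0.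

Lemma Knorm2_ge0 u : 0 <= Knorm2 K u.
Proof.
have [->|u0] := eqVneq u 0; last exact/ltW/Kspd.2.
by rewrite /Knorm2 mulmx0 mxE.
Qed.

Lemma lambda_max_gt0 : 0 < lam.
Proof.
have [/eigenvalueP [v vK v0] _] := Klam.
have vT0 : v^T != 0 by rewrite trmx_eq0.
have := Kspd.2 _ vT0; rewrite /Knorm2 trmxK vK -scalemxAl mxE => lam_pos.
have : 0 <= (v *m v^T) 0 0.
  by rewrite mxE; apply: sumr_ge0 => i _; rewrite mxE -expr2 sqr_ge0.
nra.
Qed.

Lemma Knorm2_sub_le_2lambda v : in_simplex v -> Knorm2 K (v - what) <= 2 * lam.
Proof.
move=> hv; apply: le_trans (Knorm2_le_lambda_max Kspd.1 Klam.2 _) _.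
by rewrite mulrC ler_wpM2r ?simplex_sub_norm2_le2 // ltW ?lambda_max_gt0.
Qed.

Lemma Knorm2_Delta_le (ip im : 'I_n) : ip != im -> Knorm2 K (Delta R ip im) <= 2 * lam.
Proof.
move=> ne; rewrite -(tr_Delta_mul_Delta R ne) mulrC.
exact: Knorm2_le_lambda_max Kspd.1 Klam.2 _.
Qed.

Lemma alpha_hat_mul_Knorm2 v (ip im : 'I_n) : Knorm2 K (Delta R ip im) != 0 ->
  alpha_hat K what v ip im * Knorm2 K (Delta R ip im) =
    gradc K what v im - gradc K what v ip.
Proof.
move=> q0; rewrite /alpha_hat divfK // -mulmxA tr_Delta_mulmx !gradcE.
rewrite -[v - what]opprB mulmxN; move: (K *m _) => M.
by rewrite !mxE opprK addrC.
Qed.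

Lemma Knorm2_exchange v (ip im : 'I_n) (a : R) :
  Knorm2 K (v + a *: Delta R ip im - what) =
    Knorm2 K (v - what) - 2 * a * (gradc K what v im - gradc K what v ip)
      + a ^+ 2 * Knorm2 K (Delta R ip im).
Proof.
by rewrite addrAC Knorm2_addZ ?Kspd.1 // -mulmxA tr_Delta_mulmx !gradcE; ring.
Qed.

Lemma VE_step_decrease v v' : in_simplex v -> VE_step K what v v' ->
  in_simplex v' /\
  2 * lam * Knorm2 K (v' - what) <=
    2 * lam * Knorm2 K (v - what) - Knorm2 K (v - what) ^+ 2.
Proof.
move=> hv [ip [im [hp hm ->]]].
have gap := Knorm2_le_gradc_gap what_simplex hv hp hm.
have f0 := Knorm2_ge0 (v - what).
rewrite Delta_eq0; have [eq_pm|ne] := eqVneq ip im.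
  move: gap; rewrite eq_pm subrr => f_le0.
  have -> : Knorm2 K (v - what) = 0 by apply/le_anti/andP.
  by split=> //; lra.
have D0 : Delta R ip im != 0 by rewrite Delta_eq0.
have q0 : 0 < Knorm2 K (Delta R ip im) := Kspd.2 _ D0.
have aq := alpha_hat_mul_Knorm2 v (lt0r_neq0 q0).
split.
  apply: in_simplex_exchange => //; rewrite alpha_hat_le // andbT.
  by rewrite -(pmulr_lge0 _ q0) aq subr_ge0 hp.
by rewrite Knorm2_exchange exact_line_search_decrease ?f0 ?gap ?q0 ?Knorm2_Delta_le.
Qed.

End VertexExchange.

Unset Implicit Arguments.

Theorem lemmaA7 (R : rcfType) (Om : nat) (K : 'M[R]_Om) (lam : R)
    (what : 'cV[R]_Om) (w : nat -> 'cV[R]_Om) :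
  spd K -> is_lambda_max K lam -> in_simplex what ->
  (forall (v : 'cV[R]_Om) (ip im : 'I_Om),
      in_simplex v -> is_iplus K what v ip -> is_iminus K what v im ->
      Delta R ip im != 0 -> alpha_hat K what v ip im <= v im 0) ->
  in_simplex (w 1%N) ->
  (forall n : nat, (1 <= n)%N -> VE_step K what (w n) (w n.+1)) ->
  forall n : nat, (1 <= n)%N ->
    Knorm2 K (w n - what) <= 8 * lam / (n%:R + 3).
Proof.
move=> Kspd Klam what_simplex alpha_hat_le w1_simplex VE_w.
have lam0 := lambda_max_gt0 Kspd Klam.
have f0 n := Knorm2_ge0 Kspd (w n - what).
suff bound n : (1 <= n)%N ->
    in_simplex (w n) /\ n%:R * Knorm2 K (w n - what) <= 2 * lam.
  move=> n n1; have [_ nf] := bound n n1.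
  by apply: harmonic_bound_le_rate; rewrite ?ler1n.
elim: n => [//|[|n] IH] _.
  by rewrite mul1r; split=> //; apply: Knorm2_sub_le_2lambda.
have [wn_simplex nf] := IH isT.
have [wn1_simplex decr] :=
  VE_step_decrease Kspd Klam what_simplex alpha_hat_le wn_simplex (VE_w n.+1 isT).
split=> //; rewrite -natr1.
by apply: harmonic_bound_succ nf decr; rewrite ?ler1n ?mulr_gt0.
Qed.
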